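(* Let $r_1,r_2,r_3,L,M>0$ with $r_2>\max(r_1,r_3)$, and let $\lambda_1$, $\varphi_1$, $F$ be as in the context. Let $c_A>2\sqrt{-\lambda_1}$, let $0<T\le+\infty$, and let $A\in\mathcal C(\mathbb{R},[0,+\infty))$ with $A(t)=c_At$ for $t\in[0,T)$. Let $r(t,x)=r_1$ if $x<A(t)$, $r_2$ if $A(t)\le x<A(t)+L$, $r_3$ if $x\ge A(t)+L$, and let $f$ be globally bounded in $(t,x)$, $\mathcal C^2$ in $u$, with $f(t,x,0)=0$, $\partial_uf(t,x,0)=r(t,x)$, $r(t,x)u\ge f(t,x,u)\ge r(t,x)u-Mu^2$ for $u\ge0$, and $f(t,x,u)<0$ for $u>1$. Let $c=F(c_A)$ if $c_A<2\sqrt{r_1}+2\sqrt{-\lambda_1-r_1}$ and $c=2\sqrt{r_1}$ if $c_A\ge2\sqrt{r_1}+2\sqrt{-\lambda_1-r_1}$, let $\lambda(c)=\frac12(c-\sqrt{c^2-4r_1})$, and define $$\overline{u}(t,x)=\begin{cases}2 & x\le ct-\frac{\ln2}{\lambda(c)},\\ e^{-\lambda(c)(x-ct)} & ct-\frac{\ln 2}{\lambda(c)}<x<c_At,\\ e^{-\lambda(c)(c_A-c)t}e^{-\frac{c_A(x-c_At)}{2}}\varphi_1\big(\frac{x-c_At}{L}\big) & x\ge c_At.\end{cases}$$ Then for every constant $C\ge1$, $C\overline{u}$ is a (generalized) super-solution of $\partial_tu=\partial_{xx}u+f(t,x,u)$ for $t\in[0,T)$, $x\in\mathbb{R}$.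
   Context: Let $\underline{L}=0$ if $r_1=r_3$ and $\underline{L}=\frac{1}{\sqrt{r_2-\max(r_1,r_3)}}\operatorname{arccot}\big(\sqrt{\frac{r_2-\max(r_1,r_3)}{|r_1-r_3|}}\big)$ otherwise ($\operatorname{arccot}$ the inverse of $\cot|_{(0,\pi)}$). $\lambda_1=-\max(r_1,r_3)$ if $L\le\underline{L}$; if $L>\underline{L}$, $\lambda_1$ is the unique solution in $(-r_2,\min(-\max(r_1,r_3),\pi^2/L^2-r_2))$ of $\cot(L\sqrt{r_2+\lambda_1})=\frac{r_2+\lambda_1-\sqrt{(r_1+\lambda_1)(r_3+\lambda_1)}}{\sqrt{r_2+\lambda_1}(\sqrt{-r_1-\lambda_1}+\sqrt{-r_3-\lambda_1})}$. $F(c)=\frac{c-2\sqrt{-\lambda_1-r_1}}{2}+\frac{2r_1}{c-2\sqrt{-\lambda_1-r_1}}$ for $c>2\sqrt{-\lambda_1-r_1}$. The function $\varphi_1$ (a positive $\mathcal C^1$ solution of $-L^{-2}\varphi''-m\varphi=\lambda_1\varphi$ with $m=r_1\mathbf 1_{y<0}+r_2\mathbf 1_{0\le y<1}+r_3\mathbf 1_{y\ge1}$, normalized by $\varphi_1(0)=1$) is: (1) if $L>\underline{L}$: with $C_3\in(0,\pi/2)$ given by $\cot C_3=\sqrt{(-r_1-\lambda_1)/(r_2+\lambda_1)}$, $\varphi_1(y)=e^{L\sqrt{-r_1-\lambda_1}\,y}$ for $y\le0$, $\varphi_1(y)=\sin(L\sqrt{r_2+\lambda_1}\,y+C_3)/\sin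 C_3$ for $0<y<1$, $\varphi_1(y)=\frac{\sin(L\sqrt{r_2+\lambda_1}+C_3)}{\sin C_3}e^{-L\sqrt{-r_3-\lambda_1}(y-1)}$ for $y\ge1$; (2) if $r_1<r_3$ and $L\le\underline{L}$ (so $\lambda_1=-r_3$): with $C_3\in(0,\pi/2)$, $\cot C_3=\sqrt{(r_3-r_1)/(r_2-r_3)}$, $\varphi_1(y)=e^{L\sqrt{r_3-r_1}\,y}$ for $y\le0$, $\sin(L\sqrt{r_2-r_3}\,y+C_3)/\sin C_3$ for $0<y<1$, and $\frac{\sin(L\sqrt{r_2-r_3}+C_3)}{\sin C_3}+\frac{\sqrt{r_2-r_3}\cos(L\sqrt{r_2-r_3}+C_3)}{\sin C_3}L(y-1)$ for $y\ge1$; (3) if $r_1>r_3$ and $L\le\underline{L}$ (so $\lambda_1=-r_1$): $\varphi_1(y)=\psi(1-y)/\psi(1)$ where $\psi$ is the function of case (2) with $r_1$ and $r_3$ interchanged. A (generalized) super-solution is a continuous function, smooth on finitely many space-time regions separated by $\mathcal C^1$ curves, satisfying $\partial_t\overline u\ge\partial_{xx}\overline u+f(t,x,\overline u)$ in each region and $\partial_x\overline u(t,x^-)\ge\partial_x\overline u(t,x^+)$ across each interface. *)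

From Stdlib Require Import Reals Lra.
From Coquelicot Require Import Coquelicot.
Open Scope R_scope.

(* arccot = inverse of cot restricted to (0,pi) *)
Definition arccot (y : R) : R := PI / 2 - atan y.

Definition Lbar (r1 r2 r3 : R) : R :=
  if Req_EM_T r1 r3 then 0
  else / sqrt (r2 - Rmax r1 r3) *
       arccot (sqrt ((r2 - Rmax r1 r3) / Rabs (r1 - r3))).

(* lambda_1 is characterized by its defining property (the paper proves the
   solution in the case L > Lbar is unique). *)
Definition lambda1_spec (r1 r2 r3 L l : R) : Prop :=
  (L <= Lbar r1 r2 r3 /\ l = - Rmax r1 r3) \/
  (Lbar r1 r2 r3 < L /\ - r2 < l /\
   l < Rmin (- Rmax r1 r3) (PI ^ 2 / L ^ 2 - r2) /\
   cos (L * sqrt (r2 + l)) / sin (L * sqrt (r2 + l)) =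
   (r2 + l - sqrt ((r1 + l) * (r3 + l))) /
   (sqrt (r2 + l) * (sqrt (- r1 - l) + sqrt (- r3 - l)))).

Definition Ffun (r1 l c : R) : R :=
  (c - 2 * sqrt (- l - r1)) / 2 + 2 * r1 / (c - 2 * sqrt (- l - r1)).

Definition phi_case1 (r1 r2 r3 L l y : R) : R :=
  let C3 := arccot (sqrt ((- r1 - l) / (r2 + l))) in
  if Rle_dec y 0 then exp (L * sqrt (- r1 - l) * y)
  else if Rlt_dec y 1 then sin (L * sqrt (r2 + l) * y + C3) / sin C3
  else sin (L * sqrt (r2 + l) + C3) / sin C3 *
       exp (- L * sqrt (- r3 - l) * (y - 1)).

Definition phi_case2 (r1 r2 r3 L y : R) : R :=
  let C3 := arccot (sqrt ((r3 - r1) / (r2 - r3))) in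
  if Rle_dec y 0 then exp (L * sqrt (r3 - r1) * y)
  else if Rlt_dec y 1 then sin (L * sqrt (r2 - r3) * y + C3) / sin C3
  else sin (L * sqrt (r2 - r3) + C3) / sin C3 +
       sqrt (r2 - r3) * cos (L * sqrt (r2 - r3) + C3) / sin C3 * (L * (y - 1)).

(* varphi_1 (the remaining case r1 = r3, L <= Lbar = 0 cannot occur since L > 0) *)
Definition phi1 (r1 r2 r3 L l y : R) : R :=
  if Rle_dec L (Lbar r1 r2 r3) then
    (if Rlt_dec r1 r3 then phi_case2 r1 r2 r3 L y
     else if Rlt_dec r3 r1 then phi_case2 r3 r2 r1 L (1 - y) / phi_case2 r3 r2 r1 L 1
     else 0)
  else phi_case1 r1 r2 r3 L l y.

Definition cspeed (r1 l cA : R) : R :=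
  if Rlt_dec cA (2 * sqrt r1 + 2 * sqrt (- l - r1)) then Ffun r1 l cA
  else 2 * sqrt r1.

Definition lam (r1 c : R) : R := (c - sqrt (c ^ 2 - 4 * r1)) / 2.

Definition ubar (r1 r2 r3 L l cA : R) (t x : R) : R :=
  let c := cspeed r1 l cA in
  let lc := lam r1 c in
  if Rle_dec x (c * t - ln 2 / lc) then 2
  else if Rlt_dec x (cA * t) then exp (- lc * (x - c * t))
  else exp (- lc * (cA - c) * t) * exp (- cA * (x - cA * t) / 2) *
       phi1 r1 r2 r3 L l ((x - cA * t) / L).

Definition rfun (r1 r2 r3 L : R) (A : R -> R) (t x : R) : R :=
  if Rlt_dec x (A t) then r1
  else if Rlt_dec x (A t + L) then r2
  else r3.

Definition in_time (T : Rbar) (t : R) : Prop := 0 <= t /\ Rbar_lt (Finite t) T.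

(* the i-th region (0 <= i <= k) between consecutive interface curves
   g 0 < g 1 < ... < g (k-1); region 0 is left of g 0, region k right of g (k-1). *)
Definition in_region (k : nat) (g : nat -> R -> R) (i : nat) (t x : R) : Prop :=
  (i = 0%nat \/ g (pred i) t < x) /\ (i = k \/ x < g i t).

Definition dt (u : R -> R -> R) (t x : R) : R := Derive (fun s => u s x) t.
Definition dx (u : R -> R -> R) (t x : R) : R := Derive (fun y => u t y) x.
Definition dxx (u : R -> R -> R) (t x : R) : R := Derive (fun y => dx u t y) x.

Definition uncurry (v : R -> R -> R) : R * R -> R := fun p => v (fst p) (snd p).

Definition C12_at (u : R -> R -> R) (t x : R) : Prop :=
  ex_derive (fun s => u s x) t /\
  locally x (fun y => ex_derive (fun z => u t z) y) /\
  ex_derive (fun y => dx u t y) x /\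
  continuous (uncurry (dt u)) (t, x) /\
  continuous (uncurry (dx u)) (t, x) /\
  continuous (uncurry (dxx u)) (t, x).

Definition gen_supersol (f : R -> R -> R -> R) (T : Rbar) (u : R -> R -> R) : Prop :=
  (forall t x, in_time T t -> continuous (uncurry u) (t, x)) /\
  exists (k : nat) (g : nat -> R -> R),
    (forall i s, (i < k)%nat -> ex_derive (g i) s /\ continuous (Derive (g i)) s) /\
    (forall i t, (S i < k)%nat -> in_time T t -> g i t < g (S i) t) /\
    (forall i t x, (i <= k)%nat -> in_time T t -> in_region k g i t x ->
       C12_at u t x /\ dt u t x >= dxx u t x + f t x (u t x)) /\
    (forall i t, (i < k)%nat -> in_time T t ->
       exists dl dr : R,
         filterlim (fun y => dx u t y) (at_left (g i t)) (locally dl) /\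
         filterlim (fun y => dx u t y) (at_right (g i t)) (locally dr) /\
         dr <= dl).

(* Each of the four regions cut out by the lines x = ct - ln 2 / λ(c), x = c_A t and
   x = c_A t + L carries an explicit function of the form K e^{αt} h(x - βt): the constant 2,
   a super-solution because f(u) < 0 for u > 1; the KPP tail e^{-λ(x - ct)}, for which
   u_t - u_xx = (λc - λ^2) u = r_1 u >= f(u); and e^{-λ(c_A - c)t} e^{-c_A z/2} φ_1(z/L) with
   z = x - c_A t, for which the eigenvalue equation of φ_1 gives
   u_t - u_xx - r u = (c_A^2/4 + λ_1 - λ(c_A - c)) u >= 0 by the choice of c.  The pieces agree
   on the three lines and u_x jumps downwards across them: trivially at the plateau, because
   φ_1 is C^1 at z = L, and at z = 0 because φ_1'(0)/L <= sqrt(-λ_1 - r_1) <= c_A/2 - λ(c). *)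

From Stdlib Require Import Reals Lra Lia.
From Coquelicot Require Import Coquelicot.
Open Scope R_scope.
(* Coquelicot loads ssreflect, which turns bullets into no-ops. *)
Set Bullet Behavior "Strict Subproofs".

(** * Local agreement and moving profiles *)

Lemma continuous_of_ex_derive (f : R -> R) x : ex_derive f x -> continuous f x.
Proof. apply (ex_derive_continuous (K := R_AbsRing) (V := R_NormedModule)). Qed.

Lemma locally_fst_slice (P : R * R -> Prop) t x :
  locally (t, x) P -> locally t (fun s => P (s, x)).
Proof.
  intros [e He]. exists e. intros s Hs. apply He. split; [exact Hs | apply ball_center].
Qed.

Lemma locally_snd_slice (P : R * R -> Prop) t x :
  locally (t, x) P -> locally x (fun y => P (t, y)).
Proof.
  intros [e He]. exists e. intros y Hy. apply He. split; [apply ball_center | exact Hy].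
Qed.

Lemma locally_above_graph (g : R -> R) t x :
  continuous g t -> g t < x -> locally (t, x) (fun p => g (fst p) < snd p).
Proof.
  intros Hg Hx.
  assert (Hc : continuous (fun p : R * R => snd p + - g (fst p)) (t, x)).
  { apply (continuous_plus (fun p : R * R => snd p) (fun p : R * R => - g (fst p))).
    - apply continuous_snd.
    - apply (continuous_comp (fun p : R * R => g (fst p)) Ropp).
      + apply (continuous_comp fst g); [apply continuous_fst | exact Hg].
      + apply continuous_of_ex_derive; auto_derive; auto. }
  apply (filter_imp (fun p : R * R => 0 < snd p + - g (fst p))).
  { intros [s y] Hp. simpl in *. lra. }
  apply (Hc (fun r => 0 < r)). apply open_gt. simpl. lra.
Qed.

Lemma locally_below_graph (g : R -> R) t x :
  continuous g t -> x < g t -> locally (t, x) (fun p => snd p < g (fst p)).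
Proof.
  intros Hg Hx.
  assert (Hc : continuous (fun p : R * R => g (fst p) + - snd p) (t, x)).
  { apply (continuous_plus (fun p : R * R => g (fst p)) (fun p : R * R => - snd p)).
    - apply (continuous_comp fst g); [apply continuous_fst | exact Hg].
    - apply (continuous_comp snd Ropp); [apply continuous_snd |].
      apply continuous_of_ex_derive. auto_derive. auto. }
  apply (filter_imp (fun p : R * R => 0 < g (fst p) + - snd p)).
  { intros [s y] Hp. simpl in *. lra. }
  apply (Hc (fun r => 0 < r)). apply open_gt. simpl. lra.
Qed.

Definition agree_near (u v : R -> R -> R) (t x : R) : Prop :=
  locally (t, x) (fun p => u (fst p) (snd p) = v (fst p) (snd p)).

Lemma agree_near_dt u v t x : agree_near u v t x -> agree_near (dt u) (dt v) t x.
Proof.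
  unfold agree_near. intros H. apply locally_locally in H. revert H. apply filter_imp.
  intros [s y] Hp. apply Derive_ext_loc. exact (locally_fst_slice _ s y Hp).
Qed.

Lemma agree_near_dx u v t x : agree_near u v t x -> agree_near (dx u) (dx v) t x.
Proof.
  unfold agree_near. intros H. apply locally_locally in H. revert H. apply filter_imp.
  intros [s y] Hp. apply Derive_ext_loc. exact (locally_snd_slice _ s y Hp).
Qed.

Lemma C12_at_agree_near u v t x : agree_near v u t x -> C12_at v t x -> C12_at u t x.
Proof.
  intros H [Hdt [Hdx [Hdxx [Ct [Cx Cxx]]]]].
  pose proof (agree_near_dx _ _ _ _ H) as Hx.
  split; [| split; [| split; [| split; [| split]]]].
  - exact (ex_derive_ext_loc _ _ _ (locally_fst_slice _ t x H) Hdt).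
  - apply locally_snd_slice, locally_locally in H.
    generalize (filter_and _ _ H Hdx). apply filter_imp.
    intros y [Hy Hd]. exact (ex_derive_ext_loc _ _ _ Hy Hd).
  - exact (ex_derive_ext_loc _ _ _ (locally_snd_slice _ t x Hx) Hdxx).
  - exact (continuous_ext_loc _ _ _ (agree_near_dt _ _ _ _ H) Ct).
  - exact (continuous_ext_loc _ _ _ Hx Cx).
  - exact (continuous_ext_loc _ _ _ (agree_near_dx _ _ _ _ Hx) Cxx).
Qed.

Lemma agree_near_at u v t x : agree_near u v t x -> u t x = v t x.
Proof. intros H. exact (locally_singleton _ _ H). Qed.

Definition supersol_at (f : R -> R -> R -> R) (u : R -> R -> R) (t x : R) : Prop :=
  C12_at u t x /\ dt u t x >= dxx u t x + f t x (u t x).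

Section MovingProfile.

Variables (K al be : R).

Definition moving_profile (h : R -> R) (s y : R) : R := K * exp (al * s) * h (y - be * s).

Lemma continuous_moving_profile h p :
  (forall z, continuous h z) -> continuous (uncurry (moving_profile h)) p.
Proof.
  intros Hh. destruct p as [s y]. unfold uncurry, moving_profile.
  apply (continuous_mult (fun p : R * R => K * exp (al * fst p))
                         (fun p : R * R => h (snd p - be * fst p))).
  - apply (continuous_comp (fun p : R * R => fst p) (fun a => K * exp (al * a))).
    + apply continuous_fst.
    + apply continuous_of_ex_derive. auto_derive. auto.
  - apply (continuous_comp (fun p : R * R => snd p - be * fst p) h); [| apply Hh].
    apply (continuous_plus (fun p : R * R => snd p) (fun p : R * R => - (be * fst p))).
    + apply continuous_snd.
    + apply (continuous_comp (fun p : R * R => fst p) (fun a => - (be * a))).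
      * apply continuous_fst.
      * apply continuous_of_ex_derive. auto_derive. auto.
Qed.

Lemma is_derive_moving_profile_t h h1 s y :
  (forall z, is_derive h z (h1 z)) ->
  is_derive (fun s => moving_profile h s y) s
    (moving_profile (fun z => al * h z - be * h1 z) s y).
Proof.
  intros Hh. unfold moving_profile. auto_derive.
  - eexists. apply Hh.
  - rewrite (is_derive_unique _ _ _ (Hh _)). unfold Rminus. ring.
Qed.

Lemma is_derive_moving_profile_x h h1 s y :
  (forall z, is_derive h z (h1 z)) ->
  is_derive (fun y => moving_profile h s y) y (moving_profile h1 s y).
Proof.
  intros Hh. unfold moving_profile. auto_derive.
  - eexists. apply Hh.
  - rewrite (is_derive_unique _ _ _ (Hh _)). unfold Rminus. ring.
Qed.

Lemma continuous_moving_profile_x h h1 s y :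
  (forall z, is_derive h z (h1 z)) -> continuous (moving_profile h s) y.
Proof.
  intros Hh. apply continuous_of_ex_derive. eexists. apply is_derive_moving_profile_x, Hh.
Qed.

Variables (h h1 h2 : R -> R).
Hypothesis Hh : forall z, is_derive h z (h1 z).
Hypothesis Hh1 : forall z, is_derive h1 z (h2 z).
Hypothesis Hh2 : forall z, continuous h2 z.

Lemma dt_moving_profile s y :
  dt (moving_profile h) s y = moving_profile (fun z => al * h z - be * h1 z) s y.
Proof. apply is_derive_unique, is_derive_moving_profile_t, Hh. Qed.

Lemma dx_moving_profile s y : dx (moving_profile h) s y = moving_profile h1 s y.
Proof. apply is_derive_unique, is_derive_moving_profile_x, Hh. Qed.

Lemma dxx_moving_profile s y : dxx (moving_profile h) s y = moving_profile h2 s y.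
Proof.
  unfold dxx. rewrite (Derive_ext _ _ _ (dx_moving_profile s)).
  apply is_derive_unique, is_derive_moving_profile_x, Hh1.
Qed.

Lemma C12_at_moving_profile t x : C12_at (moving_profile h) t x.
Proof.
  assert (Ch1 : forall z, continuous h1 z).
  { intros z. apply continuous_of_ex_derive. eexists. apply Hh1. }
  assert (Ch : forall z, continuous h z).
  { intros z. apply continuous_of_ex_derive. eexists. apply Hh. }
  split; [| split; [| split; [| split; [| split]]]].
  - eexists. apply is_derive_moving_profile_t, Hh.
  - apply filter_forall. intros y. eexists. apply is_derive_moving_profile_x, Hh.
  - eexists. apply (is_derive_ext (moving_profile h1 t)).
    + intros y. symmetry. apply dx_moving_profile.
    + apply is_derive_moving_profile_x, Hh1.
  - apply (continuous_ext (uncurry (moving_profile (fun z => al * h z - be * h1 z)))).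
    + intros [s y]. symmetry. apply dt_moving_profile.
    + apply continuous_moving_profile. intros z.
      apply (continuous_plus (fun z => al * h z) (fun z => - (be * h1 z))).
      * apply (continuous_comp h (fun v => al * v)); [apply Ch |].
        apply continuous_of_ex_derive. auto_derive. auto.
      * apply (continuous_comp h1 (fun v => - (be * v))); [apply Ch1 |].
        apply continuous_of_ex_derive. auto_derive. auto.
  - apply (continuous_ext (uncurry (moving_profile h1))).
    + intros [s y]. symmetry. apply dx_moving_profile.
    + apply continuous_moving_profile, Ch1.
  - apply (continuous_ext (uncurry (moving_profile h2))).
    + intros [s y]. symmetry. apply dxx_moving_profile.
    + apply continuous_moving_profile, Hh2.
Qed.

Lemma supersol_at_moving_profile (f : R -> R -> R -> R) (u : R -> R -> R) t x :
  agree_near (moving_profile h) u t x ->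
  K * exp (al * t) * (al * h (x - be * t) - be * h1 (x - be * t)) >=
    K * exp (al * t) * h2 (x - be * t) + f t x (K * exp (al * t) * h (x - be * t)) ->
  supersol_at f u t x.
Proof.
  intros Hu Hineq. split.
  - exact (C12_at_agree_near _ _ _ _ Hu (C12_at_moving_profile t x)).
  - change (dxx u t x) with (dx (dx u) t x).
    rewrite <- (agree_near_at _ _ _ _ (agree_near_dt _ _ _ _ Hu)).
    rewrite <- (agree_near_at _ _ _ _ (agree_near_dx _ _ _ _ (agree_near_dx _ _ _ _ Hu))).
    rewrite <- (agree_near_at _ _ _ _ Hu).
    change (dx (dx (moving_profile h)) t x) with (dxx (moving_profile h) t x).
    rewrite dt_moving_profile, dxx_moving_profile. exact Hineq.
Qed.

End MovingProfile.

(** * Gluing across interfaces *)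

Lemma continuous_glue (u v w : R * R -> R) p :
  continuous v p -> continuous w p -> v p = u p -> w p = u p ->
  locally p (fun q => u q = v q \/ u q = w q) -> continuous u p.
Proof.
  intros Hv Hw Ev Ew Hvw. apply filterlim_locally. intros eps.
  generalize (filter_and _ _ Hvw (filter_and _ _ (proj1 (filterlim_locally v (v p)) Hv eps)
                                               (proj1 (filterlim_locally w (w p)) Hw eps))).
  apply filter_imp. intros q [[E | E] [Bv Bw]]; rewrite E.
  - rewrite <- Ev. exact Bv.
  - rewrite <- Ew. exact Bw.
Qed.

Lemma Derive_on_interval (u v v1 : R -> R) a b y :
  a < y < b -> (forall z, a < z < b -> u z = v z) -> (forall z, is_derive v z (v1 z)) ->
  Derive u y = v1 y.
Proof.
  intros Hy Huv Hv. apply is_derive_unique. apply (is_derive_ext_loc v); [| apply Hv].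
  apply (locally_interval _ y a b); [simpl; lra .. |].
  intros z Haz Hzb. symmetry. apply Huv. simpl in *. lra.
Qed.

Lemma filterlim_Derive_at_left (u v v1 : R -> R) a b :
  a < b -> (forall y, a < y < b -> u y = v y) -> (forall y, is_derive v y (v1 y)) ->
  continuous v1 b -> filterlim (Derive u) (at_left b) (locally (v1 b)).
Proof.
  intros Hab Huv Hv Hc. apply (filterlim_ext_loc v1).
  - apply (locally_interval _ b a p_infty); [simpl; lra | exact I |].
    intros y Hay _ Hyb. symmetry. apply (Derive_on_interval u v v1 a b); auto.
  - intros P HP. apply filter_le_within, Hc, HP.
Qed.

Lemma filterlim_Derive_at_right (u v v1 : R -> R) a b :
  a < b -> (forall y, a < y < b -> u y = v y) -> (forall y, is_derive v y (v1 y)) ->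
  continuous v1 a -> filterlim (Derive u) (at_right a) (locally (v1 a)).
Proof.
  intros Hab Huv Hv Hc. apply (filterlim_ext_loc v1).
  - apply (locally_interval _ a m_infty b); [exact I | simpl; lra |].
    intros y _ Hyb Hay. symmetry. apply (Derive_on_interval u v v1 a b); auto.
  - intros P HP. apply filter_le_within, Hc, HP.
Qed.

Definition dx_jump_down (u : R -> R -> R) (t y0 : R) : Prop :=
  exists dl dr : R,
    filterlim (fun y => dx u t y) (at_left y0) (locally dl) /\
    filterlim (fun y => dx u t y) (at_right y0) (locally dr) /\ dr <= dl.

Lemma dx_jump (u : R -> R -> R) t y0 a b (v w v1 w1 : R -> R) :
  a < y0 < b ->
  (forall y, a < y < y0 -> u t y = v y) -> (forall y, y0 < y < b -> u t y = w y) ->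
  (forall y, is_derive v y (v1 y)) -> (forall y, is_derive w y (w1 y)) ->
  continuous v1 y0 -> continuous w1 y0 -> w1 y0 <= v1 y0 -> dx_jump_down u t y0.
Proof.
  intros Hy0 Hv Hw Dv Dw Cv Cw Hjump. exists (v1 y0), (w1 y0). split; [| split].
  - exact (filterlim_Derive_at_left _ v v1 a y0 (proj1 Hy0) Hv Dv Cv).
  - exact (filterlim_Derive_at_right _ w w1 y0 b (proj2 Hy0) Hw Dw Cw).
  - exact Hjump.
Qed.

Lemma C1_of_constant_derivative (g : R -> R) q s :
  (forall s, is_derive g s q) -> ex_derive g s /\ continuous (Derive g) s.
Proof.
  intros Hg. split; [exists q; apply Hg |].
  apply (continuous_ext (fun _ => q)); [| apply continuous_const].
  intros s'. symmetry. apply is_derive_unique, Hg.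
Qed.

(** * The glued front *)

Lemma rfun_left r1 r2 r3 L A t x : x < A t -> rfun r1 r2 r3 L A t x = r1.
Proof. intros H. unfold rfun. destruct (Rlt_dec x (A t)); [reflexivity | contradiction]. Qed.

Lemma rfun_mid r1 r2 r3 L A t x : A t <= x < A t + L -> rfun r1 r2 r3 L A t x = r2.
Proof.
  intros H. unfold rfun.
  destruct (Rlt_dec x (A t)); [lra |]. destruct (Rlt_dec x (A t + L)); [reflexivity | lra].
Qed.

Lemma rfun_right r1 r2 r3 L A t x : 0 <= L -> A t + L <= x -> rfun r1 r2 r3 L A t x = r3.
Proof.
  intros HL H. unfold rfun.
  destruct (Rlt_dec x (A t)); [lra |]. destruct (Rlt_dec x (A t + L)); [lra | reflexivity].
Qed.

Section Profile.

Local Set Implicit Arguments.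

(* [pm] and [pr] continue φ from [0, 1) and from [1, +oo) to C^2 solutions on all of R of
   y'' = -L^2 (r_i + l) y, i = 2, 3.  At 0 only an upper bound on the slope is needed, since
   left of c_A t the front uses the KPP tail instead of φ. *)
Record eigen_profile (r2 r3 L l a : R) (phi pm dpm pr dpr : R -> R) : Prop := {
  pm_derive : forall y, is_derive pm y (dpm y);
  dpm_derive : forall y, is_derive dpm y (- L ^ 2 * (r2 + l) * pm y);
  pr_derive : forall y, is_derive pr y (dpr y);
  dpr_derive : forall y, is_derive dpr y (- L ^ 2 * (r3 + l) * pr y);
  pm_0 : pm 0 = 1;
  dpm_0 : dpm 0 <= L * a;
  pm_pr_1 : pm 1 = pr 1;
  dpm_dpr_1 : dpm 1 = dpr 1;
  pm_ge0 : forall y, 0 <= y <= 1 -> 0 <= pm y;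
  pr_ge0 : forall y, 1 <= y -> 0 <= pr y;
  phi_pm : forall y, 0 <= y < 1 -> phi y = pm y;
  phi_pr : forall y, 1 <= y -> phi y = pr y }.

End Profile.

Section Front.

Variables (r1 r2 r3 L l a cA c lm C : R) (T : Rbar) (A : R -> R) (f : R -> R -> R -> R).
Variables (phi pm dpm pr dpr : R -> R).

Hypothesis HL : 0 < L.
Hypothesis HC : 1 <= C.
Hypothesis HAT : forall t, in_time T t -> A t = cA * t.
Hypothesis Hf_kpp : forall t x u, 0 <= u -> f t x u <= rfun r1 r2 r3 L A t x * u.
Hypothesis Hf_neg : forall t x u, 1 < u -> f t x u < 0.
Hypothesis Hlm : 0 < lm.
Hypothesis Hlm_root : lm * c - lm ^ 2 = r1.
Hypothesis Hc_cA : c <= cA.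
Hypothesis Hlm_decay : lm * (cA - c) <= cA ^ 2 / 4 + l.
Hypothesis Hlm_slope : lm <= cA / 2 - a.
Hypothesis Hprof : eigen_profile r2 r3 L l a phi pm dpm pr dpr.

(* [ubar] with c, λ(c) and φ_1 left abstract; the two are convertible. *)
Definition front (t x : R) : R :=
  if Rle_dec x (c * t - ln 2 / lm) then 2
  else if Rlt_dec x (cA * t) then exp (- lm * (x - c * t))
  else exp (- lm * (cA - c) * t) * exp (- cA * (x - cA * t) / 2) * phi ((x - cA * t) / L).

Definition front_edge (i : nat) (s : R) : R :=
  match i with 0%nat => c * s - ln 2 / lm | 1%nat => cA * s | _ => cA * s + L end.

Definition tail_shape (z : R) : R := exp (- lm * z).

Definition patch_shape (P : R -> R) (z : R) : R := exp (- cA * z / 2) * P (z / L).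

Definition dpatch_shape (P P1 : R -> R) (z : R) : R :=
  - cA / 2 * patch_shape P z + / L * patch_shape P1 z.

Definition d2patch_shape (P P1 P2 : R -> R) (z : R) : R :=
  - cA / 2 * dpatch_shape P P1 z + / L * dpatch_shape P1 P2 z.

Definition plateau : R -> R -> R := moving_profile C 0 0 (fun _ => 2).
Definition tail : R -> R -> R := moving_profile C (lm * c) 0 tail_shape.
Definition patch (P : R -> R) : R -> R -> R :=
  moving_profile C (- lm * (cA - c)) cA (patch_shape P).

Let U (s y : R) : R := C * front s y.

Lemma front_edge_derive i s :
  is_derive (front_edge i) s (match i with 0%nat => c | _ => cA end).
Proof. destruct i as [| [| i]]; unfold front_edge; auto_derive; auto; ring. Qed.

Lemma continuous_front_edge i t : continuous (front_edge i) t.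
Proof. apply continuous_of_ex_derive. eexists. apply front_edge_derive. Qed.

Lemma front_edge_01 t : 0 <= t -> front_edge 0 t < front_edge 1 t.
Proof.
  intros Ht. simpl. pose proof ln_lt_2.
  assert (0 < ln 2 / lm) by (apply Rdiv_lt_0_compat; lra). nra.
Qed.

Lemma front_plateau s y : y <= front_edge 0 s -> U s y = plateau s y.
Proof.
  intros H. unfold U, front, plateau, moving_profile. simpl in H.
  destruct (Rle_dec y (c * s - ln 2 / lm)); [| contradiction].
  rewrite Rmult_0_l, exp_0. ring.
Qed.

Lemma front_tail s y : front_edge 0 s < y < front_edge 1 s -> U s y = tail s y.
Proof.
  intros [H0 H1]. unfold U, front, tail, tail_shape, moving_profile. simpl in H0, H1.
  destruct (Rle_dec y (c * s - ln 2 / lm)); [lra |].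
  destruct (Rlt_dec y (cA * s)); [| lra].
  rewrite Rmult_assoc, <- exp_plus. do 2 f_equal. ring.
Qed.

Lemma front_patch s y P :
  front_edge 0 s < y -> cA * s <= y ->
  phi ((y - cA * s) / L) = P ((y - cA * s) / L) -> U s y = patch P s y.
Proof.
  intros H0 H1 HP. unfold U, front, patch, patch_shape, moving_profile. simpl in H0.
  destruct (Rle_dec y (c * s - ln 2 / lm)); [lra |].
  destruct (Rlt_dec y (cA * s)); [lra |].
  rewrite HP. ring.
Qed.

Lemma patch_coordinate_ge k s y : cA * s + k * L <= y -> k <= (y - cA * s) / L.
Proof.
  intros H. apply Rmult_le_reg_r with L; [exact HL |].
  unfold Rdiv. rewrite Rmult_assoc, Rinv_l; lra.
Qed.

Lemma patch_coordinate_lt s y : y < cA * s + L -> (y - cA * s) / L < 1.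
Proof.
  intros H. apply Rmult_lt_reg_r with L; [exact HL |].
  unfold Rdiv. rewrite Rmult_assoc, Rinv_l; lra.
Qed.

Lemma front_patch_pm s y :
  front_edge 0 s < y -> front_edge 1 s <= y < front_edge 2 s -> U s y = patch pm s y.
Proof.
  intros H0 [H1 H2]. simpl in H1, H2. apply front_patch; [exact H0 | exact H1 |].
  apply (phi_pm Hprof). split.
  - apply patch_coordinate_ge. lra.
  - apply patch_coordinate_lt. exact H2.
Qed.

Lemma front_patch_pr s y : front_edge 0 s < y -> front_edge 2 s <= y -> U s y = patch pr s y.
Proof.
  intros H0 H2. simpl in H2. apply front_patch; [exact H0 | lra |].
  apply (phi_pr Hprof), patch_coordinate_ge. lra.
Qed.

Lemma agree_plateau t x : x < front_edge 0 t -> agree_near plateau U t x.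
Proof.
  intros H. generalize (locally_below_graph _ t x (continuous_front_edge 0 t) H).
  unfold agree_near. apply filter_imp. intros [s y] Hy. symmetry.
  apply front_plateau. simpl in *. lra.
Qed.

Lemma agree_tail t x :
  front_edge 0 t < x < front_edge 1 t -> agree_near tail U t x.
Proof.
  intros [H0 H1].
  generalize (filter_and _ _ (locally_above_graph _ t x (continuous_front_edge 0 t) H0)
                             (locally_below_graph _ t x (continuous_front_edge 1 t) H1)).
  unfold agree_near. apply filter_imp. intros [s y] Hy. symmetry. apply front_tail. exact Hy.
Qed.

Lemma agree_patch_pm t x :
  0 <= t -> front_edge 1 t < x < front_edge 2 t -> agree_near (patch pm) U t x.
Proof.
  intros Ht [H1 H2]. assert (H0 : front_edge 0 t < x) by (pose proof (front_edge_01 t Ht); lra).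
  generalize (filter_and _ _ (locally_above_graph _ t x (continuous_front_edge 0 t) H0)
               (filter_and _ _ (locally_above_graph _ t x (continuous_front_edge 1 t) H1)
                               (locally_below_graph _ t x (continuous_front_edge 2 t) H2))).
  unfold agree_near. apply filter_imp. intros [s y] [Hy0 [Hy1 Hy2]]. symmetry.
  apply front_patch_pm; simpl in *; lra.
Qed.

Lemma agree_patch_pr t x : 0 <= t -> front_edge 2 t < x -> agree_near (patch pr) U t x.
Proof.
  intros Ht H2.
  assert (H0 : front_edge 0 t < x) by (pose proof (front_edge_01 t Ht); simpl in *; lra).
  generalize (filter_and _ _ (locally_above_graph _ t x (continuous_front_edge 0 t) H0)
                             (locally_above_graph _ t x (continuous_front_edge 2 t) H2)).
  unfold agree_near. apply filter_imp. intros [s y] [Hy0 Hy2]. symmetry.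
  apply front_patch_pr; simpl in *; lra.
Qed.

Lemma is_derive_patch_shape P P1 z :
  (forall y, is_derive P y (P1 y)) -> is_derive (patch_shape P) z (dpatch_shape P P1 z).
Proof.
  intros HP. unfold dpatch_shape, patch_shape. auto_derive.
  - eexists. apply HP.
  - rewrite (is_derive_unique _ _ _ (HP _)). unfold Rdiv. ring.
Qed.

Lemma is_derive_dpatch_shape P P1 P2 z :
  (forall y, is_derive P y (P1 y)) -> (forall y, is_derive P1 y (P2 y)) ->
  is_derive (dpatch_shape P P1) z (d2patch_shape P P1 P2 z).
Proof.
  intros HP HP1. unfold dpatch_shape at 1.
  apply (is_derive_plus (fun z => - cA / 2 * patch_shape P z) (fun z => / L * patch_shape P1 z)).
  - apply is_derive_scal, is_derive_patch_shape, HP.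
  - apply is_derive_scal, is_derive_patch_shape, HP1.
Qed.

Lemma patch_shape_C2 P P1 k :
  (forall y, is_derive P y (P1 y)) -> (forall y, is_derive P1 y (k * P y)) ->
  (forall z, is_derive (patch_shape P) z (dpatch_shape P P1 z)) /\
  (forall z, is_derive (dpatch_shape P P1) z (d2patch_shape P P1 (fun y => k * P y) z)) /\
  (forall z, continuous (d2patch_shape P P1 (fun y => k * P y)) z).
Proof.
  intros HP HP1. split; [| split].
  - intros z. apply is_derive_patch_shape, HP.
  - intros z. apply is_derive_dpatch_shape; assumption.
  - intros z. apply continuous_of_ex_derive. unfold d2patch_shape. eexists.
    apply (is_derive_plus (fun z => - cA / 2 * dpatch_shape P P1 z)
                          (fun z => / L * dpatch_shape P1 (fun y => k * P y) z)).
    + apply is_derive_scal, (is_derive_dpatch_shape P P1 (fun y => k * P y)); assumption.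
    + apply is_derive_scal, (is_derive_dpatch_shape P1 (fun y => k * P y) (fun y => k * P1 y)).
      * exact HP1.
      * intros y. apply is_derive_scal, HP.
Qed.

Lemma continuous_patch_shape P z : (forall y, continuous P y) -> continuous (patch_shape P) z.
Proof.
  intros HP. unfold patch_shape.
  apply (continuous_mult (fun z => exp (- cA * z / 2)) (fun z => P (z / L))).
  - apply continuous_of_ex_derive. auto_derive. auto.
  - apply (continuous_comp (fun z => z / L) P); [| apply HP].
    apply continuous_of_ex_derive. auto_derive. auto.
Qed.

Lemma continuous_plateau p : continuous (uncurry plateau) p.
Proof. apply continuous_moving_profile. intros z. apply continuous_const. Qed.

Lemma continuous_tail p : continuous (uncurry tail) p.
Proof.
  apply continuous_moving_profile. intros z.
  apply continuous_of_ex_derive. unfold tail_shape. auto_derive. auto.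
Qed.

Lemma continuous_patch P P1 p :
  (forall y, is_derive P y (P1 y)) -> continuous (uncurry (patch P)) p.
Proof.
  intros HP. apply continuous_moving_profile. intros z.
  apply continuous_patch_shape. intros y. apply continuous_of_ex_derive. eexists. apply HP.
Qed.

Lemma plateau_tail_edge s : tail s (front_edge 0 s) = plateau s (front_edge 0 s).
Proof.
  unfold tail, plateau, moving_profile, tail_shape, front_edge.
  rewrite Rmult_assoc, <- exp_plus.
  replace (lm * c * s + - lm * (c * s - ln 2 / lm - 0 * s)) with (ln 2) by (field; lra).
  rewrite exp_ln by lra. rewrite Rmult_0_l, exp_0. ring.
Qed.

Lemma tail_patch_edge s : tail s (front_edge 1 s) = patch pm s (front_edge 1 s).
Proof.
  unfold tail, patch, moving_profile, tail_shape, patch_shape, front_edge.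
  rewrite Rminus_eq_0. replace (- cA * 0 / 2) with 0 by field.
  replace (0 / L) with 0 by (unfold Rdiv; ring). rewrite exp_0, (pm_0 Hprof).
  replace (- lm * (cA - c) * s) with (lm * c * s + - lm * (cA * s - 0 * s)) by ring.
  rewrite exp_plus. ring.
Qed.

Lemma patch_edge s : patch pm s (front_edge 2 s) = patch pr s (front_edge 2 s).
Proof.
  unfold patch, moving_profile, patch_shape, front_edge.
  replace ((cA * s + L - cA * s) / L) with 1 by (field; lra). rewrite (pm_pr_1 Hprof). reflexivity.
Qed.

Lemma front_near_edge0 t : 0 <= t ->
  locally (t, front_edge 0 t)
    (fun p => uncurry U p = uncurry plateau p \/ uncurry U p = uncurry tail p).
Proof.
  intros Ht.
  generalize (locally_below_graph _ t _ (continuous_front_edge 1 t) (front_edge_01 t Ht)).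
  apply filter_imp. intros [s y] Hy. unfold uncurry. simpl in *.
  destruct (Rle_dec y (front_edge 0 s)) as [H | H].
  - left. apply front_plateau, H.
  - right. apply front_tail. simpl in *. lra.
Qed.

Lemma front_near_edge1 t : 0 <= t ->
  locally (t, front_edge 1 t)
    (fun p => uncurry U p = uncurry tail p \/ uncurry U p = uncurry (patch pm) p).
Proof.
  intros Ht.
  assert (H12 : front_edge 1 t < front_edge 2 t) by (simpl in *; lra).
  generalize (filter_and _ _
    (locally_above_graph _ t _ (continuous_front_edge 0 t) (front_edge_01 t Ht))
    (locally_below_graph _ t _ (continuous_front_edge 2 t) H12)).
  apply filter_imp. intros [s y] [Hy0 Hy2]. unfold uncurry. simpl in *.
  destruct (Rlt_dec y (cA * s)) as [H | H].
  - left. apply front_tail. simpl in *. lra.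
  - right. apply front_patch_pm; simpl in *; lra.
Qed.

Lemma front_near_edge2 t : 0 <= t ->
  locally (t, front_edge 2 t)
    (fun p => uncurry U p = uncurry (patch pm) p \/ uncurry U p = uncurry (patch pr) p).
Proof.
  intros Ht.
  assert (H02 : front_edge 0 t < front_edge 2 t)
    by (pose proof (front_edge_01 t Ht); simpl in *; lra).
  assert (H12 : front_edge 1 t < front_edge 2 t) by (simpl; lra).
  generalize (filter_and _ _ (locally_above_graph _ t _ (continuous_front_edge 0 t) H02)
                             (locally_above_graph _ t _ (continuous_front_edge 1 t) H12)).
  apply filter_imp. intros [s y] [Hy0 Hy1]. unfold uncurry. simpl in *.
  destruct (Rlt_dec y (cA * s + L)) as [H | H].
  - left. apply front_patch_pm; simpl in *; lra.
  - right. apply front_patch_pr; simpl in *; lra.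
Qed.

Lemma front_continuous t x : 0 <= t -> continuous (uncurry U) (t, x).
Proof.
  intros Ht. pose proof (front_edge_01 t Ht) as H01.
  assert (H12 : front_edge 1 t < front_edge 2 t) by (simpl in *; lra).
  pose proof (continuous_patch _ _ (t, x) (pm_derive Hprof)) as Cpm.
  pose proof (continuous_patch _ _ (t, x) (pr_derive Hprof)) as Cpr.
  destruct (Rtotal_order x (front_edge 0 t)) as [Hx | [Hx | Hx]].
  - exact (continuous_ext_loc _ _ _ (agree_plateau t x Hx) (continuous_plateau _)).
  - subst x. apply (continuous_glue _ _ _ _ (continuous_plateau _) (continuous_tail _));
      [| | exact (front_near_edge0 t Ht)]; unfold uncurry; simpl.
    + symmetry. apply front_plateau, Rle_refl.
    + rewrite plateau_tail_edge. symmetry. apply front_plateau, Rle_refl.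
  - destruct (Rtotal_order x (front_edge 1 t)) as [Hx1 | [Hx1 | Hx1]].
    + exact (continuous_ext_loc _ _ _ (agree_tail t x (conj Hx Hx1)) (continuous_tail _)).
    + subst x. apply (continuous_glue _ _ _ _ (continuous_tail _) Cpm);
        [| | exact (front_near_edge1 t Ht)]; unfold uncurry; simpl.
      * rewrite tail_patch_edge. symmetry. apply front_patch_pm; simpl in *; lra.
      * symmetry. apply front_patch_pm; simpl in *; lra.
    + destruct (Rtotal_order x (front_edge 2 t)) as [Hx2 | [Hx2 | Hx2]].
      * exact (continuous_ext_loc _ _ _ (agree_patch_pm t x Ht (conj Hx1 Hx2)) Cpm).
      * subst x. apply (continuous_glue _ _ _ _ Cpm Cpr);
          [| | exact (front_near_edge2 t Ht)]; unfold uncurry; simpl.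
        -- rewrite patch_edge. symmetry. apply front_patch_pr; simpl in *; lra.
        -- symmetry. apply front_patch_pr; simpl in *; lra.
      * exact (continuous_ext_loc _ _ _ (agree_patch_pr t x Ht Hx2) Cpr).
Qed.

Lemma tail_shape_derive z : is_derive tail_shape z (- lm * tail_shape z).
Proof. unfold tail_shape. auto_derive; [auto | ring]. Qed.

Lemma dtail_shape_derive z :
  is_derive (fun z => - lm * tail_shape z) z (lm ^ 2 * tail_shape z).
Proof. unfold tail_shape. auto_derive; [auto | ring]. Qed.

Lemma front_supersol_plateau t x :
  x < front_edge 0 t -> supersol_at f U t x.
Proof.
  intros Hx.
  assert (D : forall (k : R) z, is_derive (fun _ : R => k) z 0) by (intros; auto_derive; auto).
  apply (supersol_at_moving_profile C 0 0 (fun _ => 2) (fun _ => 0) (fun _ => 0) (D 2) (D 0)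
           (fun z => continuous_const _ z) f U t x (agree_plateau t x Hx)).
  rewrite Rmult_0_l, exp_0.
  assert (f t x (C * 1 * 2) < 0) by (apply Hf_neg; lra). lra.
Qed.

Lemma front_supersol_tail t x : in_time T t ->
  front_edge 0 t < x < front_edge 1 t -> supersol_at f U t x.
Proof.
  intros Ht Hx.
  assert (C2 : forall z, continuous (fun z => lm ^ 2 * tail_shape z) z).
  { intros z. apply continuous_of_ex_derive. unfold tail_shape. auto_derive. auto. }
  apply (supersol_at_moving_profile _ _ _ _ _ _ tail_shape_derive dtail_shape_derive C2 f U t x
           (agree_tail t x Hx)).
  set (z := x - 0 * t). set (w := C * exp (lm * c * t) * tail_shape z).
  assert (Hw : 0 <= w).
  { unfold w, tail_shape. pose proof (exp_pos (lm * c * t)). pose proof (exp_pos (- lm * z)).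
    apply Rmult_le_pos; [apply Rmult_le_pos |]; lra. }
  assert (Hr : rfun r1 r2 r3 L A t x = r1).
  { apply rfun_left. rewrite (HAT t Ht). simpl in Hx. lra. }
  pose proof (Hf_kpp t x w Hw) as Hf. rewrite Hr in Hf.
  assert (E : C * exp (lm * c * t) * (lm * c * tail_shape z - 0 * (- lm * tail_shape z))
              - C * exp (lm * c * t) * (lm ^ 2 * tail_shape z) = r1 * w).
  { unfold w. rewrite <- Hlm_root. ring. }
  unfold w in *. lra.
Qed.

Lemma front_supersol_patch P P1 r t x : in_time T t ->
  (forall y, is_derive P y (P1 y)) -> (forall y, is_derive P1 y (- L ^ 2 * (r + l) * P y)) ->
  agree_near (patch P) U t x -> 0 <= P ((x - cA * t) / L) -> rfun r1 r2 r3 L A t x = r ->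
  supersol_at f U t x.
Proof.
  intros Ht HP HP1 Hagree HP0 Hr.
  destruct (patch_shape_C2 P P1 _ HP HP1) as [D1 [D2 C2]].
  apply (supersol_at_moving_profile _ _ _ _ _ _ D1 D2 C2 f U t x Hagree).
  set (z := x - cA * t). set (K := C * exp (- lm * (cA - c) * t)).
  assert (Hw : 0 <= K * patch_shape P z).
  { unfold K, patch_shape, z. pose proof (exp_pos (- lm * (cA - c) * t)).
    pose proof (exp_pos (- cA * (x - cA * t) / 2)).
    apply Rmult_le_pos; apply Rmult_le_pos; lra. }
  pose proof (Hf_kpp t x _ Hw) as Hf. rewrite Hr in Hf.
  (* The P' terms cancel, and the eigen-ODE turns P'' into a multiple of P. *)
  assert (E : K * (- lm * (cA - c) * patch_shape P z - cA * dpatch_shape P P1 z)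
              - K * d2patch_shape P P1 (fun y => - L ^ 2 * (r + l) * P y) z
              - r * (K * patch_shape P z)
              = K * patch_shape P z * (cA ^ 2 / 4 + l - lm * (cA - c))).
  { unfold d2patch_shape, dpatch_shape, patch_shape. field. lra. }
  assert (0 <= K * patch_shape P z * (cA ^ 2 / 4 + l - lm * (cA - c))) by (apply Rmult_le_pos; lra).
  lra.
Qed.

Lemma front_supersol_patch_pm t x : in_time T t ->
  front_edge 1 t < x < front_edge 2 t -> supersol_at f U t x.
Proof.
  intros Ht Hx.
  apply (front_supersol_patch pm dpm r2 t x Ht (pm_derive Hprof) (dpm_derive Hprof)
           (agree_patch_pm t x (proj1 Ht) Hx)); simpl in Hx.
  - apply (pm_ge0 Hprof). split.
    + apply (patch_coordinate_ge 0). lra.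
    + left. apply patch_coordinate_lt. lra.
  - apply rfun_mid. rewrite (HAT t Ht). lra.
Qed.

Lemma front_supersol_patch_pr t x : in_time T t ->
  front_edge 2 t < x -> supersol_at f U t x.
Proof.
  intros Ht Hx.
  apply (front_supersol_patch pr dpr r3 t x Ht (pr_derive Hprof) (dpr_derive Hprof)
           (agree_patch_pr t x (proj1 Ht) Hx)); simpl in Hx.
  - apply (pr_ge0 Hprof), (patch_coordinate_ge 1). lra.
  - apply rfun_right; [lra |]. rewrite (HAT t Ht). lra.
Qed.

Lemma front_supersol_region i t x : (i <= 3)%nat -> in_time T t ->
  in_region 3 front_edge i t x -> supersol_at f U t x.
Proof.
  intros Hi Ht [Hl Hr]. destruct i as [| [| [| [| i]]]]; simpl in Hl, Hr.
  - destruct Hr as [Hr | Hr]; [discriminate |]. exact (front_supersol_plateau t x Hr).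
  - destruct Hl as [Hl | Hl]; [discriminate |]. destruct Hr as [Hr | Hr]; [discriminate |].
    exact (front_supersol_tail t x Ht (conj Hl Hr)).
  - destruct Hl as [Hl | Hl]; [discriminate |]. destruct Hr as [Hr | Hr]; [discriminate |].
    exact (front_supersol_patch_pm t x Ht (conj Hl Hr)).
  - destruct Hl as [Hl | Hl]; [discriminate |]. exact (front_supersol_patch_pr t x Ht Hl).
  - lia.
Qed.

Lemma front_jump_edge0 t : 0 <= t -> dx_jump_down U t (front_edge 0 t).
Proof.
  intros Ht. pose proof (front_edge_01 t Ht).
  assert (D0 : forall z : R, is_derive (fun _ : R => 0) z 0) by (intros; auto_derive; auto).
  apply (dx_jump U t _ (front_edge 0 t - 1) (front_edge 1 t) (plateau t) (tail t)
           (moving_profile C 0 0 (fun _ => 0) t)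
           (moving_profile C (lm * c) 0 (fun z => - lm * tail_shape z) t)).
  - lra.
  - intros y Hy. apply front_plateau. lra.
  - intros y Hy. apply front_tail. lra.
  - intros y. apply is_derive_moving_profile_x. intros z. auto_derive; auto.
  - intros y. apply is_derive_moving_profile_x, tail_shape_derive.
  - apply (continuous_moving_profile_x _ _ _ _ _ _ _ D0).
  - apply (continuous_moving_profile_x _ _ _ _ _ _ _ dtail_shape_derive).
  - unfold moving_profile, tail_shape.
    pose proof (exp_pos (lm * c * t)). pose proof (exp_pos (- lm * (front_edge 0 t - 0 * t))).
    assert (0 <= C * exp (lm * c * t) * (lm * exp (- lm * (front_edge 0 t - 0 * t))))
      by (apply Rmult_le_pos; [apply Rmult_le_pos |]; nra).
    lra.
Qed.

Lemma front_jump_edge1 t : 0 <= t -> dx_jump_down U t (front_edge 1 t).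
Proof.
  intros Ht. pose proof (front_edge_01 t Ht).
  destruct (patch_shape_C2 _ _ _ (pm_derive Hprof) (dpm_derive Hprof)) as [Dm [Dm1 _]].
  apply (dx_jump U t _ (front_edge 0 t) (front_edge 2 t) (tail t) (patch pm t)
           (moving_profile C (lm * c) 0 (fun z => - lm * tail_shape z) t)
           (moving_profile C (- lm * (cA - c)) cA (dpatch_shape pm dpm) t)).
  - simpl in *. lra.
  - intros y Hy. apply front_tail. lra.
  - intros y Hy. apply front_patch_pm; simpl in *; lra.
  - intros y. apply is_derive_moving_profile_x, tail_shape_derive.
  - intros y. apply is_derive_moving_profile_x, Dm.
  - apply (continuous_moving_profile_x _ _ _ _ _ _ _ dtail_shape_derive).
  - apply (continuous_moving_profile_x _ _ _ _ _ _ _ Dm1).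
  - assert (Ha : dpm 0 / L <= a).
    { apply Rmult_le_reg_r with L; [exact HL |]. unfold Rdiv.
      rewrite Rmult_assoc, Rinv_l by lra. pose proof (dpm_0 Hprof). lra. }
    unfold moving_profile, dpatch_shape, patch_shape, tail_shape, front_edge.
    rewrite Rminus_eq_0. replace (- cA * 0 / 2) with 0 by field.
    replace (0 / L) with 0 by (unfold Rdiv; ring). rewrite exp_0, (pm_0 Hprof).
    replace (C * exp (lm * c * t) * (- lm * exp (- lm * (cA * t - 0 * t))))
      with (C * exp (- lm * (cA - c) * t) * (- lm))
      by (replace (- lm * (cA - c) * t) with (lm * c * t + - lm * (cA * t - 0 * t)) by ring;
          rewrite exp_plus; ring).
    pose proof (exp_pos (- lm * (cA - c) * t)).
    apply Rmult_le_compat_l; [apply Rmult_le_pos; lra |]. unfold Rdiv in Ha. lra.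
Qed.

Lemma front_jump_edge2 t : 0 <= t -> dx_jump_down U t (front_edge 2 t).
Proof.
  intros Ht. pose proof (front_edge_01 t Ht).
  destruct (patch_shape_C2 _ _ _ (pm_derive Hprof) (dpm_derive Hprof)) as [Dm [Dm1 _]].
  destruct (patch_shape_C2 _ _ _ (pr_derive Hprof) (dpr_derive Hprof)) as [Dr [Dr1 _]].
  apply (dx_jump U t _ (front_edge 1 t) (front_edge 2 t + 1) (patch pm t) (patch pr t)
           (moving_profile C (- lm * (cA - c)) cA (dpatch_shape pm dpm) t)
           (moving_profile C (- lm * (cA - c)) cA (dpatch_shape pr dpr) t)).
  - simpl. lra.
  - intros y Hy. apply front_patch_pm; simpl in *; lra.
  - intros y Hy. apply front_patch_pr; simpl in *; lra.
  - intros y. apply is_derive_moving_profile_x, Dm.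
  - intros y. apply is_derive_moving_profile_x, Dr.
  - apply (continuous_moving_profile_x _ _ _ _ _ _ _ Dm1).
  - apply (continuous_moving_profile_x _ _ _ _ _ _ _ Dr1).
  - unfold moving_profile, dpatch_shape, patch_shape, front_edge.
    replace ((cA * t + L - cA * t) / L) with 1 by (field; lra).
    rewrite (pm_pr_1 Hprof), (dpm_dpr_1 Hprof). lra.
Qed.

Theorem front_supersolution : gen_supersol f T (fun t x => C * front t x).
Proof.
  split; [intros t x Ht; exact (front_continuous t x (proj1 Ht)) |].
  exists 3%nat, front_edge. split; [| split; [| split]].
  - intros i s _. exact (C1_of_constant_derivative _ _ s (front_edge_derive i)).
  - intros i t Hi Ht. destruct i as [| [| i]].
    + exact (front_edge_01 t (proj1 Ht)).
    + simpl. lra.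
    + lia.
  - exact front_supersol_region.
  - intros [| [| [| i]]] t Hi [Ht _].
    + exact (front_jump_edge0 t Ht).
    + exact (front_jump_edge1 t Ht).
    + exact (front_jump_edge2 t Ht).
    + lia.
Qed.

End Front.

(** * The speed and the principal eigenfunction *)

Lemma lam_pushed r1 d : 0 < d < 2 * sqrt r1 -> 0 < r1 -> lam r1 (d / 2 + 2 * r1 / d) = d / 2.
Proof.
  intros [Hd Hdr] Hr1. unfold lam.
  assert (Hrr : sqrt r1 * sqrt r1 = r1) by (apply sqrt_sqrt; lra).
  assert (Hpos : 0 <= 2 * r1 / d - d / 2).
  { replace (2 * r1 / d - d / 2) with ((4 * r1 - d * d) / (2 * d)) by (field; lra).
    apply Rlt_le, Rdiv_lt_0_compat; nra. }
  replace ((d / 2 + 2 * r1 / d) ^ 2 - 4 * r1) with ((2 * r1 / d - d / 2) ^ 2) by (field; lra).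
  rewrite sqrt_pow2 by exact Hpos. field. lra.
Qed.

Lemma lam_kpp r1 : 0 < r1 -> lam r1 (2 * sqrt r1) = sqrt r1.
Proof.
  intros Hr1. unfold lam.
  assert (Hrr : sqrt r1 * sqrt r1 = r1) by (apply sqrt_sqrt; lra).
  replace ((2 * sqrt r1) ^ 2 - 4 * r1) with 0 by nra. rewrite sqrt_0. field.
Qed.

Lemma front_speed_spec r1 l cA :
  0 < r1 -> 0 <= - l - r1 -> 2 * sqrt (- l) < cA ->
  let c := cspeed r1 l cA in
  let lm := lam r1 c in
  0 < lm /\ lm * c - lm ^ 2 = r1 /\ c <= cA /\
  lm * (cA - c) <= cA ^ 2 / 4 + l /\ lm <= cA / 2 - sqrt (- l - r1).
Proof.
  intros Hr1 Hl HcA c lm.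
  set (s := sqrt (- l - r1)) in *. set (q := sqrt (- l)) in *. set (rho := sqrt r1) in *.
  assert (Hs : 0 <= s) by apply sqrt_pos.
  assert (Hss : s * s = - l - r1) by (apply sqrt_sqrt; lra).
  assert (Hqq : q * q = - l) by (apply sqrt_sqrt; lra).
  assert (Hsq : s <= q) by (apply sqrt_le_1_alt; lra).
  assert (Hrho : 0 < rho) by (apply sqrt_lt_R0; lra).
  assert (Hrr : rho * rho = r1) by (apply sqrt_sqrt; lra).
  unfold lm, c, cspeed, Ffun. fold s rho.
  (* In the pushed case λ(c) = (c_A - 2 s) / 2 and the last two bounds are equalities. *)
  destruct (Rlt_dec cA (2 * rho + 2 * s)) as [Hpush | Hkpp].
  - set (d := cA - 2 * s).
    assert (Hd : 0 < d) by (unfold d; lra).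
    rewrite lam_pushed by (fold rho; unfold d; lra).
    assert (Hdd : d * d + 4 * s * d >= 4 * r1) by (unfold d in *; nra).
    assert (H2r1 : 2 * r1 / d <= d / 2 + 2 * s).
    { apply Rmult_le_reg_r with d; [exact Hd |]. unfold Rdiv.
      replace (2 * r1 * / d * d) with (2 * r1) by (field; lra). nra. }
    split; [lra | split; [field; lra | split; [unfold d in *; lra | split]]].
    + right. replace cA with (d + 2 * s) by (unfold d; ring).
      replace l with (- r1 - s * s) by lra. field. lra.
    + unfold d. lra.
  - rewrite lam_kpp by exact Hr1. fold rho.
    split; [lra | split; [nra | split; [lra | split]]].
    + assert (cA / 2 - rho >= s) by lra. nra.
    + lra.
Qed.

Lemma arccot_spec y : 0 < y ->
  0 < arccot y < PI / 2 /\ 0 < sin (arccot y) /\ cos (arccot y) = y * sin (arccot y).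
Proof.
  intros Hy. unfold arccot.
  assert (H0 : 0 < atan y) by (rewrite <- atan_0; apply atan_increasing; exact Hy).
  pose proof (atan_bound y) as [Hb1 Hb2].
  rewrite sin_shift, cos_shift, sin_atan, cos_atan.
  assert (0 < sqrt (1 + y²)) by (apply sqrt_lt_R0; unfold Rsqr; nra).
  split; [lra | split].
  - apply Rdiv_lt_0_compat; lra.
  - field. lra.
Qed.

Lemma arccot_inv y : 0 < y -> arccot (/ y) = PI / 2 - arccot y.
Proof. intros Hy. unfold arccot. rewrite atan_inv by exact Hy. ring. Qed.

Lemma Lbar_sym r1 r2 r3 : Lbar r1 r2 r3 = Lbar r3 r2 r1.
Proof.
  unfold Lbar. rewrite Rmax_comm, Rabs_minus_sym.
  destruct (Req_EM_T r1 r3), (Req_EM_T r3 r1); try reflexivity; exfalso; auto.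
Qed.

Lemma sin_nonneg_phase th C3 y :
  0 <= C3 -> 0 <= th -> th + C3 <= PI -> 0 <= y <= 1 -> 0 <= sin (th * y + C3).
Proof. intros HC Hth Hsum Hy. apply sin_ge_0; nra. Qed.

(* [L <= Lbar] says exactly that the phase of the sine arc stays below π/2 on [0, 1], so that
   it and its affine continuation are nonnegative. *)
Lemma critical_phase ra r2 rb L : ra < rb < r2 -> 0 < L -> L <= Lbar ra r2 rb ->
  let b := sqrt (r2 - rb) in let sg := sqrt (rb - ra) in
  let C3 := arccot (sqrt ((rb - ra) / (r2 - rb))) in
  0 < b /\ b * b = r2 - rb /\ 0 < sg /\ sg * sg = rb - ra /\
  0 < C3 /\ L * b + C3 <= PI / 2 /\ 0 < sin C3 /\ cos C3 = sg / b * sin C3 /\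
  0 < sin (L * b + C3) /\ 0 <= cos (L * b + C3).
Proof.
  intros Hr HL HLb b sg C3. pose proof PI_RGT_0.
  assert (Hb : 0 < b) by (apply sqrt_lt_R0; lra).
  assert (Hs : 0 < sg) by (apply sqrt_lt_R0; lra).
  assert (Hq : 0 < sg / b) by (apply Rdiv_lt_0_compat; assumption).
  unfold Lbar in HLb. destruct (Req_EM_T ra rb); [lra |].
  rewrite Rmax_right, Rabs_left1, sqrt_div in HLb by lra.
  replace (- (ra - rb)) with (rb - ra) in HLb by ring. fold b sg in HLb.
  replace (b / sg) with (/ (sg / b)) in HLb by (field; lra).
  assert (HC3 : C3 = arccot (sg / b)) by (unfold C3; rewrite sqrt_div by lra; reflexivity).
  rewrite arccot_inv in HLb by exact Hq. rewrite <- HC3 in HLb.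
  destruct (arccot_spec _ Hq) as [[Ha1 Ha2] [Hsn Hcs]]. rewrite <- HC3 in Ha1, Ha2, Hsn, Hcs.
  apply (Rmult_le_compat_l b) in HLb; [| lra].
  rewrite <- Rmult_assoc, Rinv_r, Rmult_1_l in HLb by lra.
  assert (Hsum : L * b + C3 <= PI / 2) by lra.
  repeat split; try assumption; try (apply sqrt_sqrt; lra).
  - apply sin_gt_0; nra.
  - apply cos_ge_0; nra.
Qed.

Lemma phi_case2_1 ra r2 rb L :
  phi_case2 ra r2 rb L 1 =
    sin (L * sqrt (r2 - rb) + arccot (sqrt ((rb - ra) / (r2 - rb)))) /
    sin (arccot (sqrt ((rb - ra) / (r2 - rb)))).
Proof.
  unfold phi_case2. destruct (Rle_dec 1 0); [lra |]. destruct (Rlt_dec 1 1); [lra |].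
  replace (L * (1 - 1)) with 0 by ring. rewrite Rmult_0_r, Rplus_0_r. reflexivity.
Qed.

Lemma phi1_supercritical r1 r2 r3 L l y :
  Lbar r1 r2 r3 < L -> phi1 r1 r2 r3 L l y = phi_case1 r1 r2 r3 L l y.
Proof. intros H. unfold phi1. destruct (Rle_dec L (Lbar r1 r2 r3)); [lra | reflexivity]. Qed.

Lemma phi1_subcritical_lt r1 r2 r3 L l y :
  L <= Lbar r1 r2 r3 -> r1 < r3 -> phi1 r1 r2 r3 L l y = phi_case2 r1 r2 r3 L y.
Proof.
  intros HL H. unfold phi1.
  destruct (Rle_dec L (Lbar r1 r2 r3)); [| lra]. destruct (Rlt_dec r1 r3); [reflexivity | lra].
Qed.

Lemma phi1_subcritical_gt r1 r2 r3 L l y :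
  L <= Lbar r1 r2 r3 -> r3 < r1 ->
  phi1 r1 r2 r3 L l y = phi_case2 r3 r2 r1 L (1 - y) / phi_case2 r3 r2 r1 L 1.
Proof.
  intros HL H. unfold phi1. destruct (Rle_dec L (Lbar r1 r2 r3)); [| lra].
  destruct (Rlt_dec r1 r3); [lra |]. destruct (Rlt_dec r3 r1); [reflexivity | lra].
Qed.

(* The eigenvalue equation says exactly that the sine arc meets the decaying
   exponential of rate g in a C^1 way at y = 1. *)
Lemma sine_exp_matching a b g th C3 :
  0 < a -> 0 < b -> 0 < g -> 0 < th < PI -> 0 < C3 < PI / 2 -> 0 < sin C3 ->
  cos C3 = a / b * sin C3 ->
  cos th / sin th = (b * b - a * g) / (b * (a + g)) ->
  0 < sin (th + C3) /\ th + C3 < PI /\ b * cos (th + C3) = - g * sin (th + C3).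
Proof.
  intros Ha Hb Hg Hth HC3 HS Hcos Hcot.
  assert (Hsth : 0 < sin th) by (apply sin_gt_0; lra).
  assert (Hcth : cos th = sin th * ((b * b - a * g) / (b * (a + g)))).
  { rewrite <- Hcot. field. lra. }
  assert (Hsum : sin (th + C3) = sin th * sin C3 * (a * a + b * b) / (b * (a + g))).
  { rewrite sin_plus, Hcos, Hcth. field. lra. }
  assert (Hpos : 0 < sin (th + C3)).
  { rewrite Hsum. apply Rdiv_lt_0_compat; [| nra].
    apply Rmult_lt_0_compat; [nra | nra]. }
  split; [exact Hpos | split].
  - destruct (Rlt_le_dec (th + C3) PI) as [Hlt | [Hgt | Heq]]; [exact Hlt | |].
    + assert (sin (th + C3) < 0) by (apply sin_lt_0; lra). lra.
    + rewrite <- Heq, sin_PI in Hpos. lra.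
  - rewrite cos_plus, Hsum, Hcos, Hcth. field. lra.
Qed.

Lemma phase_below_PI L b : 0 < L -> 0 < b -> b * b < PI ^ 2 / L ^ 2 -> 0 < L * b < PI.
Proof.
  intros HL Hb Hbb. pose proof PI_RGT_0. split; [nra |].
  apply (Rmult_lt_compat_l (L ^ 2)) in Hbb; [| nra].
  replace (L ^ 2 * (PI ^ 2 / L ^ 2)) with (PI * PI) in Hbb by (field; lra).
  nra.
Qed.

Lemma supercritical_phase r1 r2 r3 L l :
  0 < r1 -> 0 < r3 -> Rmax r1 r3 < r2 -> 0 < L ->
  - r2 < l -> l < Rmin (- Rmax r1 r3) (PI ^ 2 / L ^ 2 - r2) ->
  cos (L * sqrt (r2 + l)) / sin (L * sqrt (r2 + l)) =
    (r2 + l - sqrt ((r1 + l) * (r3 + l))) /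
    (sqrt (r2 + l) * (sqrt (- r1 - l) + sqrt (- r3 - l))) ->
  let a := sqrt (- r1 - l) in let b := sqrt (r2 + l) in let g := sqrt (- r3 - l) in
  let C3 := arccot (sqrt ((- r1 - l) / (r2 + l))) in
  0 < b /\ b * b = r2 + l /\ g * g = - r3 - l /\ 0 < L * b /\ 0 < C3 /\ 0 < sin C3 /\
  cos C3 = a / b * sin C3 /\ 0 < sin (L * b + C3) /\ L * b + C3 < PI /\
  b * cos (L * b + C3) = - g * sin (L * b + C3).
Proof.
  intros Hr1 Hr3 Hmax HL Hl1 Hl2 Hcot a b g C3.
  pose proof (Rmax_l r1 r3). pose proof (Rmax_r r1 r3).
  pose proof (Rmin_l (- Rmax r1 r3) (PI ^ 2 / L ^ 2 - r2)).
  pose proof (Rmin_r (- Rmax r1 r3) (PI ^ 2 / L ^ 2 - r2)).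
  fold a b g in Hcot.
  assert (Ha : 0 < a) by (apply sqrt_lt_R0; lra).
  assert (Hb : 0 < b) by (apply sqrt_lt_R0; lra).
  assert (Hbb : b * b = r2 + l) by (apply sqrt_sqrt; lra).
  assert (Hg : 0 < g) by (apply sqrt_lt_R0; lra).
  assert (Hgg : g * g = - r3 - l) by (apply sqrt_sqrt; lra).
  assert (Hag : sqrt ((r1 + l) * (r3 + l)) = a * g).
  { replace ((r1 + l) * (r3 + l)) with ((- r1 - l) * (- r3 - l)) by ring. apply sqrt_mult; lra. }
  rewrite Hag, <- Hbb in Hcot.
  assert (HC3 : C3 = arccot (a / b)) by (unfold C3; rewrite sqrt_div by lra; reflexivity).
  destruct (arccot_spec (a / b) ltac:(apply Rdiv_lt_0_compat; lra)) as [HC3b [HS Hcos]].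
  rewrite <- HC3 in HC3b, HS, Hcos.
  assert (Hth : 0 < L * b < PI) by (apply phase_below_PI; lra).
  destruct (sine_exp_matching a b g (L * b) C3 Ha Hb Hg Hth HC3b HS Hcos Hcot)
    as [Hs1 [HthC Hmatch]].
  repeat split; lra.
Qed.

Lemma profile_supercritical r1 r2 r3 L l :
  0 < r1 -> 0 < r3 -> Rmax r1 r3 < r2 -> 0 < L -> Lbar r1 r2 r3 < L ->
  - r2 < l -> l < Rmin (- Rmax r1 r3) (PI ^ 2 / L ^ 2 - r2) ->
  cos (L * sqrt (r2 + l)) / sin (L * sqrt (r2 + l)) =
    (r2 + l - sqrt ((r1 + l) * (r3 + l))) /
    (sqrt (r2 + l) * (sqrt (- r1 - l) + sqrt (- r3 - l))) ->
  exists pm dpm pr dpr,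
    eigen_profile r2 r3 L l (sqrt (- l - r1)) (phi1 r1 r2 r3 L l) pm dpm pr dpr.
Proof.
  intros Hr1 Hr3 Hmax HL HLb Hl1 Hl2 Hcot.
  destruct (supercritical_phase r1 r2 r3 L l Hr1 Hr3 Hmax HL Hl1 Hl2 Hcot)
    as [Hb [Hbb [Hgg [Hth [HC3 [HS [Hcos [Hs1 [HthC Hmatch]]]]]]]]].
  replace (- l - r1) with (- r1 - l) by ring.
  set (a := sqrt (- r1 - l)) in *. set (b := sqrt (r2 + l)) in *. set (g := sqrt (- r3 - l)) in *.
  set (C3 := arccot (sqrt ((- r1 - l) / (r2 + l)))) in *. set (S := sin C3) in *.
  set (S1 := sin (L * b + C3) / S).
  assert (HS1 : 0 < S1) by (apply Rdiv_lt_0_compat; assumption).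
  exists (fun y => sin (L * b * y + C3) / S), (fun y => L * b * cos (L * b * y + C3) / S),
    (fun y => S1 * exp (- L * g * (y - 1))), (fun y => S1 * (- L * g) * exp (- L * g * (y - 1))).
  split.
  - intros y. auto_derive; [auto | field; lra].
  - intros y. auto_derive; [auto | rewrite <- Hbb; field; lra].
  - intros y. auto_derive; [auto | unfold Rminus; ring].
  - intros y. auto_derive; [auto | replace (r3 + l) with (- (g * g)) by lra; unfold Rminus; ring].
  - rewrite Rmult_0_r, Rplus_0_l. fold S. field. lra.
  - rewrite Rmult_0_r, Rplus_0_l. fold S. rewrite Hcos. right. field. lra.
  - unfold S1. rewrite Rmult_1_r, Rminus_eq_0, Rmult_0_r, exp_0. ring.
  - unfold S1. rewrite !Rmult_1_r, Rminus_eq_0, Rmult_0_r, exp_0.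
    replace (L * b * cos (L * b + C3)) with (L * (b * cos (L * b + C3))) by ring.
    rewrite Hmatch. field. lra.
  - intros y Hy. apply Rmult_le_pos; [| left; apply Rinv_0_lt_compat; lra].
    apply sin_nonneg_phase; lra.
  - intros y _. apply Rmult_le_pos; [lra | left; apply exp_pos].
  - intros y Hy. rewrite phi1_supercritical by exact HLb. unfold phi_case1. fold a b g C3 S.
    destruct (Rle_dec y 0).
    + replace y with 0 by lra. rewrite !Rmult_0_r, exp_0, Rplus_0_l. fold S. field. lra.
    + destruct (Rlt_dec y 1); [reflexivity | lra].
  - intros y Hy. rewrite phi1_supercritical by exact HLb. unfold phi_case1. fold a b g C3 S.
    destruct (Rle_dec y 0); [lra |]. destruct (Rlt_dec y 1); [lra | reflexivity].
Qed.

Lemma profile_subcritical_lt r1 r2 r3 L :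
  r1 < r3 < r2 -> 0 < L -> L <= Lbar r1 r2 r3 ->
  exists pm dpm pr dpr,
    eigen_profile r2 r3 L (- r3) (sqrt (- - r3 - r1)) (phi1 r1 r2 r3 L (- r3)) pm dpm pr dpr.
Proof.
  intros Hr HL HLb. pose proof PI_RGT_0.
  destruct (critical_phase r1 r2 r3 L Hr HL HLb)
    as [Hb [Hbb [_ [_ [HC3 [Hsum [HS [Hcos [Hsin Hcs]]]]]]]]].
  replace (- - r3 - r1) with (r3 - r1) by ring.
  set (b := sqrt (r2 - r3)) in *. set (C3 := arccot (sqrt ((r3 - r1) / (r2 - r3)))) in *.
  set (S := sin C3) in *.
  exists (fun y => sin (L * b * y + C3) / S), (fun y => L * b * cos (L * b * y + C3) / S),
    (fun y => sin (L * b + C3) / S + b * cos (L * b + C3) / S * (L * (y - 1))),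
    (fun _ => b * cos (L * b + C3) / S * L).
  split.
  - intros y. auto_derive; [auto | field; lra].
  - intros y. auto_derive; [auto | replace (r2 + - r3) with (b * b) by lra; field; lra].
  - intros y. auto_derive; [auto | field; lra].
  - intros y. auto_derive; [auto | ring].
  - rewrite Rmult_0_r, Rplus_0_l. fold S. field. lra.
  - rewrite Rmult_0_r, Rplus_0_l. fold S. rewrite Hcos. right. field. lra.
  - rewrite Rmult_1_r. ring.
  - rewrite Rmult_1_r. field. lra.
  - intros y Hy. apply Rmult_le_pos; [| left; apply Rinv_0_lt_compat; lra].
    apply sin_nonneg_phase; nra.
  - intros y Hy. apply Rplus_le_le_0_compat.
    + apply Rmult_le_pos; [lra | left; apply Rinv_0_lt_compat; lra].
    + apply Rmult_le_pos; [| nra].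
      apply Rmult_le_pos; [nra | left; apply Rinv_0_lt_compat; lra].
  - intros y Hy. rewrite phi1_subcritical_lt by lra. unfold phi_case2. fold b C3 S.
    destruct (Rle_dec y 0).
    + replace y with 0 by lra. rewrite !Rmult_0_r, exp_0, Rplus_0_l. fold S. field. lra.
    + destruct (Rlt_dec y 1); [reflexivity | lra].
  - intros y Hy. rewrite phi1_subcritical_lt by lra. unfold phi_case2. fold b C3 S.
    destruct (Rle_dec y 0); [lra |]. destruct (Rlt_dec y 1); [lra | reflexivity].
Qed.

Lemma profile_subcritical_gt r1 r2 r3 L :
  r3 < r1 < r2 -> 0 < L -> L <= Lbar r1 r2 r3 ->
  exists pm dpm pr dpr,
    eigen_profile r2 r3 L (- r1) (sqrt (- - r1 - r1)) (phi1 r1 r2 r3 L (- r1)) pm dpm pr dpr.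
Proof.
  intros Hr HL HLb. pose proof PI_RGT_0.
  assert (HLb' : L <= Lbar r3 r2 r1) by (rewrite <- Lbar_sym; exact HLb).
  destruct (critical_phase r3 r2 r1 L Hr HL HLb')
    as [Hb [Hbb [Hsg [Hsgsg [HC3 [Hsum [HS [Hcos [Hsin Hcs]]]]]]]]].
  replace (- - r1 - r1) with 0 by ring. rewrite sqrt_0.
  set (b := sqrt (r2 - r1)) in *. set (C3 := arccot (sqrt ((r1 - r3) / (r2 - r1)))) in *.
  set (S := sin C3) in *. set (sg := sqrt (r1 - r3)) in *.
  set (N := sin (L * b + C3) / S).
  assert (HN0 : 0 < N) by (apply Rdiv_lt_0_compat; lra).
  exists (fun y => sin (L * b * (1 - y) + C3) / S / N),
    (fun y => - (L * b) * cos (L * b * (1 - y) + C3) / S / N),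
    (fun y => exp (L * sg * (1 - y)) / N), (fun y => - (L * sg) * exp (L * sg * (1 - y)) / N).
  split.
  - intros y. auto_derive; [auto | unfold Rminus; field; lra].
  - intros y. auto_derive;
      [auto | replace (r2 + - r1) with (b * b) by lra; unfold Rminus; field; lra].
  - intros y. auto_derive; [auto | unfold Rminus; field; lra].
  - intros y. auto_derive;
      [auto | replace (r3 + - r1) with (- (sg * sg)) by lra; unfold Rminus; field; lra].
  - rewrite Rminus_0_r, Rmult_1_r. fold N. field. lra.
  - rewrite Rminus_0_r, Rmult_1_r, Rmult_0_r.
    assert (0 <= L * b * cos (L * b + C3) / S / N).
    { unfold Rdiv. repeat apply Rmult_le_pos; try lra; left; apply Rinv_0_lt_compat; lra. }
    unfold Rdiv in *. lra.
  - rewrite Rminus_eq_0, !Rmult_0_r, Rplus_0_l, exp_0. fold S. field. lra.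
  - rewrite Rminus_eq_0, !Rmult_0_r, Rplus_0_l, exp_0. fold S. rewrite Hcos. field. lra.
  - intros y Hy. apply Rmult_le_pos; [| left; apply Rinv_0_lt_compat; lra].
    apply Rmult_le_pos; [| left; apply Rinv_0_lt_compat; lra].
    apply sin_nonneg_phase; nra.
  - intros y _. apply Rmult_le_pos; [left; apply exp_pos | left; apply Rinv_0_lt_compat; lra].
  - intros y Hy. rewrite phi1_subcritical_gt, phi_case2_1 by lra. unfold phi_case2.
    fold b C3 S sg N.
    destruct (Rle_dec (1 - y) 0); [lra |]. destruct (Rlt_dec (1 - y) 1); [reflexivity |].
    replace y with 0 by lra. replace (1 - 0 - 1) with 0 by ring. replace (1 - 0) with 1 by ring.
    rewrite !Rmult_0_r, Rplus_0_r, Rmult_1_r. reflexivity.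
  - intros y Hy. rewrite phi1_subcritical_gt, phi_case2_1 by lra. unfold phi_case2.
    fold b C3 S sg N. destruct (Rle_dec (1 - y) 0); [reflexivity | lra].
Qed.

Lemma lambda1_profile r1 r2 r3 L l :
  0 < r1 -> 0 < r3 -> Rmax r1 r3 < r2 -> 0 < L -> lambda1_spec r1 r2 r3 L l ->
  0 <= - l - r1 /\
  exists pm dpm pr dpr,
    eigen_profile r2 r3 L l (sqrt (- l - r1)) (phi1 r1 r2 r3 L l) pm dpm pr dpr.
Proof.
  intros Hr1 Hr3 Hmax HL [[HLb Hl] | [HLb [Hl1 [Hl2 Hcot]]]].
  - pose proof (Rmax_l r1 r3). pose proof (Rmax_r r1 r3).
    destruct (Rtotal_order r1 r3) as [H13 | [H13 | H13]].
    + rewrite Rmax_right in Hl by lra. subst l.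
      split; [lra | apply profile_subcritical_lt; lra].
    + exfalso. unfold Lbar in HLb. destruct (Req_EM_T r1 r3); lra.
    + rewrite Rmax_left in Hl by lra. subst l.
      split; [lra | apply profile_subcritical_gt; lra].
  - split.
    + pose proof (Rmax_l r1 r3). pose proof (Rmin_l (- Rmax r1 r3) (PI ^ 2 / L ^ 2 - r2)). lra.
    + apply profile_supercritical; assumption.
Qed.

Theorem lemma3p3
  (r1 r2 r3 L M : R) (l1 cA : R) (T : Rbar) (A : R -> R) (f : R -> R -> R -> R)
  (Hr1 : 0 < r1) (Hr2 : 0 < r2) (Hr3 : 0 < r3) (HL : 0 < L) (HM : 0 < M)
  (Hr2max : Rmax r1 r3 < r2)
  (Hl1 : lambda1_spec r1 r2 r3 L l1)
  (HcA : 2 * sqrt (- l1) < cA)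
  (HT : Rbar_lt (Finite 0) T)
  (HAc : forall t, continuous A t)
  (HA0 : forall t, 0 <= A t)
  (HAT : forall t, 0 <= t -> Rbar_lt (Finite t) T -> A t = cA * t)
  (Hfbnd : forall K, exists B, forall t x u, Rabs u <= K -> Rabs (f t x u) <= B)
  (HfC2 : forall t x u, ex_derive (f t x) u /\ ex_derive (Derive (f t x)) u /\
                        continuous (Derive_n (f t x) 2) u)
  (Hf0 : forall t x, f t x 0 = 0)
  (Hfd0 : forall t x, Derive (f t x) 0 = rfun r1 r2 r3 L A t x)
  (HfKPP : forall t x u, 0 <= u ->
     rfun r1 r2 r3 L A t x * u >= f t x u /\
     f t x u >= rfun r1 r2 r3 L A t x * u - M * u ^ 2)
  (Hfneg : forall t x u, 1 < u -> f t x u < 0) :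
  forall C : R, 1 <= C ->
    gen_supersol f T (fun t x => C * ubar r1 r2 r3 L l1 cA t x).
Proof.
  intros C HC.
  destruct (lambda1_profile r1 r2 r3 L l1 Hr1 Hr3 Hr2max HL Hl1)
    as [Hl1r1 [pm [dpm [pr [dpr Hprof]]]]].
  destruct (front_speed_spec r1 l1 cA Hr1 Hl1r1 HcA) as [Hlm [Hroot [Hc [Hdecay Hslope]]]].
  exact (front_supersolution r1 r2 r3 L l1 (sqrt (- l1 - r1)) cA (cspeed r1 l1 cA)
           (lam r1 (cspeed r1 l1 cA)) C T A f (phi1 r1 r2 r3 L l1) pm dpm pr dpr HL HC
           (fun t Ht => HAT t (proj1 Ht) (proj2 Ht))
           (fun t x u Hu => Rge_le _ _ (proj1 (HfKPP t x u Hu))) Hfneg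
           Hlm Hroot Hc Hdecay Hslope Hprof).
Qed.
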